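(* Let $m\geq 3$ be odd, $n=3m$, and let $\mathcal{L}_n$ be the latin square defined below. Every transversal of $\mathcal{L}_n$ contains at least one entry from each of the nine blocks $A_{11},A_{12},A_{13},A_{21},A_{22},A_{23},A_{31},A_{32},A_{33}$.
   Context: A latin square of order $n$ is viewed as its set of entries $(r,c,s)$ (symbol $s$ in row $r$, column $c$); a transversal is a set of $n$ entries containing each row, column and symbol exactly once. Let $m\ge3$ be odd and $n=3m$. The latin square $\mathcal{L}_n$ has rows, columns and symbols in $\{0,1,\dots,n-1\}$ and is partitioned into nine $m\times m$ blocks $A_{ij}$, $i,j\in\{1,2,3\}$: for $a,b\in\{0,\dots,m-1\}$, the cell in row $(i-1)m+a$ and column $(j-1)m+b$ contains $A_{ij}[a,b]$. Writing $t$ for the residue of $a+b$ modulo $m$ in $\{0,\dots,m-1\}$, $A_{ij}[a,b]=t$ if $t\neq 0$ and $i+j\equiv 2\pmod 3$; $A_{ij}[a,b]=t+m$ if $t\neq m-1$ and $i+j\equiv 0\pmod 3$; $A_{ij}[a,b]=t+2m$ if $t\neq m-1$ and $i+j\equiv1\pmod3$; $A_{ij}[a,b]=0$ if $t=0$ and $(i,j)=(1,1)$; $A_{ij}[a,b]=2m-1$ if $t=0$ and $(i,j)=(2,3)$; $A_{ij}[a,b]=3m-1$ if $t=0$ and $(i,j)=(3,2)$; $A_{ij}[a,b]=0$ if $t=m-1$ and $(i,j)\in\{(2,2),(3,3)\}$; $A_{ij}[a,b]=2m-1$ if $t=m-1$ and $(i,j)\in\{(1,2),(3,1)\}$; $A_{ij}[a,b]=3m-1$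 if $t=m-1$ and $(i,j)\in\{(1,3),(2,1)\}$. An entry of $\mathcal{L}_n$ is said to be in block $A_{ij}$ if its cell lies in that block. *)

From mathcomp Require Import all_boot.
Set Implicit Arguments. Unset Strict Implicit. Unset Printing Implicit Defensive.

Definition blockA (m i j a b : nat) : nat :=
  let t := (a + b) %% m in
  let k := (i + j) %% 3 in
  if (t != 0) && (k == 2) then t
  else if (t != m.-1) && (k == 0) then t + m
  else if (t != m.-1) && (k == 1) then t + 2 * m
  else if t == 0 then
    (if (i == 1) && (j == 1) then 0
     else if (i == 2) && (j == 3) then 2 * m - 1
     else 3 * m - 1)       (* (i,j) = (3,2) *)
  else (* t = m-1 *)
    (if ((i == 2) && (j == 2)) || ((i == 3) && (j == 3)) then 0
     else if ((i == 1) && (j == 2)) || ((i == 3) && (j == 1)) then 2 * m - 1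
     else 3 * m - 1).      (* (i,j) in {(1,3),(2,1)} *)

Definition blk (m r : nat) : nat := r %/ m + 1.

Definition Lsym (m r c : nat) : nat := blockA m (blk m r) (blk m c) (r %% m) (c %% m).

Definition entry (n : nat) := ('I_n * 'I_n * 'I_n)%type.

Definition Lsq (m : nat) : {set entry (3 * m)} :=
  [set e : entry (3 * m) | nat_of_ord e.2 == Lsym m e.1.1 e.1.2].

Definition is_latin_transversal (n : nat) (S T : {set entry n}) : Prop :=
  [/\ T \subset S, #|T| = n,
      forall r : 'I_n, #|[set e in T | e.1.1 == r]| = 1,
      forall c : 'I_n, #|[set e in T | e.1.2 == c]| = 1 &
      forall s : 'I_n, #|[set e in T | e.2 == s]| = 1].

Definition in_block (m i j : nat) (e : entry (3 * m)) : bool :=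
  (blk m e.1.1 == i) && (blk m e.1.2 == j).
Arguments is_latin_transversal n S T : clear implicits.
Arguments in_block m i j e : clear implicits.

From mathcomp Require Import all_boot zify.

Set Implicit Arguments.
Unset Strict Implicit.
Unset Printing Implicit Defensive.

(** Let x_ij count the entries of a transversal in block A_ij and y_ij those
    among them whose symbol is special, i.e. one of 0, 2m-1, 3m-1.  Rows and
    columns make (x_ij) a 3 x 3 array with all line sums m.  Outside its
    special cells, A_ij holds the non-special symbols of the band
    [c m, (c+1) m) with c = i+j+1 mod 3, and its special symbol is the one of
    the band c = 2i+j mod 3, placed where t = 0 if i+j = 2 mod 3 and where
    t = m-1 otherwise.  Since every symbol occurs once, each diagonal
    i+j = const (mod 3) of x sums to m-1 plus the y's on it, and each
    anti-diagonal 2i+j = const (mod 3) of y sums to 1.  Summing t over the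
    transversal and s mod m over all symbols both give multiples of m (the
    latter as m is odd); the summands differ only at special cells, by
    +-(m-1), which forces y22 + y33 = y23 + y32.  These linear constraints
    leave no x_ij equal to 0. *)

Lemma big_fibers1 (R : Type) (idx : R) (op : Monoid.com_law idx)
    (I J : finType) (A : {set I}) (key : I -> J) (F : J -> R) :
  (forall j, #|[set i in A | key i == j]| = 1) ->
  \big[op/idx]_(i in A) F (key i) = \big[op/idx]_j F j.
Proof.
move=> fiber1; rewrite (partition_big key xpredT) //=; apply: eq_bigr => j _.
have /eqP/cards1P[i0 fiber_j] := fiber1 j.
have := set11 i0; rewrite -fiber_j inE => /andP[_ /eqP key_i0].
rewrite -key_i0; apply: big_pred1 => i.
by rewrite /= -(in_set1 i) -fiber_j inE key_i0.
Qed.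

Lemma big_ord_mul (R : Type) (idx : R) (op : Monoid.law idx) k m (F : nat -> R) :
  \big[op/idx]_(r < k * m) F r = \big[op/idx]_(c < k) \big[op/idx]_(u < m) F (c * m + u).
Proof.
rewrite -(big_mkord xpredT) big_nat_mul big_mkord; apply: eq_bigr => c _.
rewrite -{1}[c * m]add0n big_addn mulSn addnK big_mkord.
by apply: eq_bigr => u _; rewrite addnC.
Qed.

Lemma sum_ord_eq1 n v : v < n -> \sum_(s < n) ((s : nat) == v : nat) = 1.
Proof.
move=> lt_vn; rewrite (bigD1 (Ordinal lt_vn)) //= eqxx big1 // => s.
by rewrite -val_eqE /= => /negbTE ->.
Qed.

Lemma predn_mul_mod_inj m a b :
  m.-1 * a = m.-1 * b %[mod m] -> a < m -> b < m -> a = b.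
Proof.
move=> eq_ab lt_am lt_bm; have m_gt0 : 0 < m by apply: leq_ltn_trans lt_am.
have shift c : m.-1 * c + c = c * m by rewrite addnC -mulSn prednK // mulnC.
move: (congr1 (modn^~ m \o addn^~ (a + b)) eq_ab) => /=.
by rewrite !modnDml addnA shift [a + b]addnC addnA shift !modnMDl !modn_small.
Qed.

Lemma dvdn_sum_ord_odd m : odd m -> m %| \sum_(u < m) u.
Proof.
by move=> m_odd; rewrite -(big_mkord xpredT (fun u => u)) bin2_sum bin2odd // dvdn_mulr.
Qed.

Lemma block_array_gt0 (m : nat) (x y : nat -> nat -> nat) :
  (forall i, 1 <= i <= 3 -> x i 1 + x i 2 + x i 3 = m) ->
  (forall j, 1 <= j <= 3 -> x 1 j + x 2 j + x 3 j = m) ->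
  (forall i j, y i j <= x i j) ->
  [/\ x 1 1 + x 2 3 + x 3 2 = m.-1 + (y 1 1 + y 2 3 + y 3 2),
      x 1 2 + x 2 1 + x 3 3 = m.-1 + (y 1 2 + y 2 1 + y 3 3) &
      x 1 3 + x 2 2 + x 3 1 = m.-1 + (y 1 3 + y 2 2 + y 3 1)] ->
  [/\ y 1 1 + y 2 2 + y 3 3 = 1, y 1 2 + y 2 3 + y 3 1 = 1 & y 1 3 + y 2 1 + y 3 2 = 1] ->
  y 2 2 + y 3 3 = y 2 3 + y 3 2 ->
  forall i j, 1 <= i <= 3 -> 1 <= j <= 3 -> 0 < x i j.
Proof.
(* E.g. if x11 = 0, rows 2, 3 and column 1 leave x22 + x33 = 1 - y23 - y32 on the
   first diagonal, while the first anti-diagonal and the balance give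
   y22 + y33 = y23 + y32 = 1. *)
move=> row col y_le [d2 d0 d1] [a0 a1 a2] balance i j i_rng j_rng.
move: (row 1 isT) (row 2 isT) (row 3 isT) (col 1 isT) (col 2 isT) (col 3 isT).
move: (y_le 1 1) (y_le 1 2) (y_le 1 3) (y_le 2 1) (y_le 2 2) (y_le 2 3)
      (y_le 3 1) (y_le 3 2) (y_le 3 3).
have : i = 1 \/ i = 2 \/ i = 3 by lia.
have : j = 1 \/ j = 2 \/ j = 3 by lia.
by move=> [->|[->|->]] [->|[->|->]]; lia.
Qed.

Section BlockStructure.

Variable m : nat.
Hypothesis m_gt2 : 2 < m.

Let m_gt0 : 0 < m. Proof. exact: ltnW (ltnW m_gt2). Qed.

Definition special (s : nat) := [|| s == 0, s == 2 * m - 1 | s == 3 * m - 1].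

(* 0, 2m-1 and 3m-1 for c = 0, 1, 2 *)
Definition special_symbol (c : nat) := c * m + (c != 0) * m.-1.

Lemma special_symbol_divn c : special_symbol c %/ m = c.
Proof. by rewrite divnMDl // divn_small //; case: (c != 0); lia. Qed.

Lemma special_symbol_modn c : special_symbol c %% m = (c != 0) * m.-1.
Proof. by rewrite modnMDl modn_small //; case: (c != 0); lia. Qed.

Lemma special_symbolP s : reflect (exists2 c, c < 3 & s = special_symbol c) (special s).
Proof.
rewrite /special /special_symbol; apply: (iffP idP) => [|[c lt_c3 ->]].
  by case/or3P=> /eqP->; [exists 0 | exists 1 | exists 2] => //; lia.
by case: c lt_c3 => [|[|[|]]] //= _; lia.
Qed.

Lemma special_modn s : special s -> s %% m = (s %/ m != 0) * m.-1.
Proof. by case/special_symbolP=> c _ ->; rewrite special_symbol_modn special_symbol_divn. Qed.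

Lemma special_divnE s c : c < 3 -> special s && (s %/ m == c) = (s == special_symbol c).
Proof.
move=> lt_c3; apply/andP/eqP => [[/special_symbolP[c' _ ->]] | ->].
  by rewrite special_symbol_divn => /eqP->.
by rewrite special_symbol_divn eqxx; split=> //; apply/special_symbolP; exists c.
Qed.

Lemma special_symbol_lt c : c < 3 -> special_symbol c < 3 * m.
Proof. by rewrite /special_symbol; case: c => [|[|[|]]] //= _; lia. Qed.

Lemma blockA_regular i j a b : 1 <= i <= 3 -> 1 <= j <= 3 -> a < m -> b < m ->
  ~~ special (blockA m i j a b) -> blockA m i j a b = (i + j).+1 %% 3 * m + (a + b) %% m.
Proof.
move=> i_rng j_rng _ _; rewrite /blockA /special.
move: (ltn_pmod (a + b) m_gt0); move: ((a + b) %% m) => t lt_tm.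
have : i = 1 \/ i = 2 \/ i = 3 by lia.
have : j = 1 \/ j = 2 \/ j = 3 by lia.
(* unfolding [modn] lets [/=] evaluate the now closed residues mod 3 *)
by move=> [->|[->|->]] [->|[->|->]]; rewrite /modn /=; repeat case: ifP; lia.
Qed.

Lemma blockA_special i j a b : 1 <= i <= 3 -> 1 <= j <= 3 -> a < m -> b < m ->
  special (blockA m i j a b) ->
  blockA m i j a b = special_symbol ((2 * i + j) %% 3) /\
  (a + b) %% m = ((i + j) %% 3 != 2) * m.-1.
Proof.
move=> i_rng j_rng _ _; rewrite /blockA /special /special_symbol.
move: (ltn_pmod (a + b) m_gt0); move: ((a + b) %% m) => t lt_tm.
have : i = 1 \/ i = 2 \/ i = 3 by lia.
have : j = 1 \/ j = 2 \/ j = 3 by lia.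
by move=> [->|[->|->]] [->|[->|->]]; rewrite /modn /=; repeat case: ifP; lia.
Qed.

Definition residue (e : entry (3 * m)) := (e.1.1 %% m + e.1.2 %% m) %% m.

Lemma blk_range (r : 'I_(3 * m)) : 1 <= blk m r <= 3.
Proof. by rewrite /blk addn1 /= ltn_divLR // mulnC. Qed.

Lemma Lsq_regular e : e \in Lsq m -> ~~ special e.2 ->
  e.2 %/ m = (blk m e.1.1 + blk m e.1.2).+1 %% 3 /\ e.2 %% m = residue e.
Proof.
rewrite inE => /eqP-> nsp.
rewrite /Lsym blockA_regular ?blk_range ?ltn_pmod //.
by rewrite divnMDl // modnMDl divn_small ?addn0 ?modn_mod // ltn_pmod.
Qed.

Lemma Lsq_special e : e \in Lsq m -> special e.2 ->
  e.2 %/ m = (2 * blk m e.1.1 + blk m e.1.2) %% 3 /\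
  residue e = ((blk m e.1.1 + blk m e.1.2) %% 3 != 2) * m.-1.
Proof.
rewrite inE => /eqP-> sp; rewrite /residue /Lsym.
have [-> ->] := blockA_special (blk_range _) (blk_range _)
                  (ltn_pmod _ m_gt0) (ltn_pmod _ m_gt0) sp.
by rewrite special_symbol_divn.
Qed.

Lemma sum_divn_eq c : c < 3 -> \sum_(s < 3 * m) (s %/ m == c : nat) = m.
Proof.
move=> lt_c3; rewrite (big_ord_mul _ _ _ (fun s => s %/ m == c : nat)).
rewrite (eq_bigr (fun c' : 'I_3 => m * (c' == c :> nat))).
  by rewrite -big_distrr /= sum_ord_eq1 ?muln1.
move=> c' _; rewrite (eq_bigr (fun=> (c' == c :> nat) : nat)) => [|u _].
  by rewrite sum_nat_const card_ord.
by rewrite divnMDl // divn_small // addn0.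
Qed.

Lemma sum_blk i : 1 <= i <= 3 -> \sum_(r < 3 * m) (blk m r == i : nat) = m.
Proof.
move=> i_rng; rewrite -[RHS](@sum_divn_eq i.-1); last by lia.
by apply: eq_bigr => r _; rewrite /blk; lia.
Qed.

Lemma sum_special_divn c : c < 3 ->
  \sum_(s < 3 * m) (special s && (s %/ m == c) : nat) = 1.
Proof.
move=> lt_c3; rewrite -[RHS](sum_ord_eq1 (special_symbol_lt lt_c3)).
by apply: eq_bigr => s _; rewrite special_divnE.
Qed.

Lemma sum_modn : \sum_(r < 3 * m) r %% m = 3 * \sum_(u < m) u.
Proof.
rewrite (big_ord_mul _ _ _ (modn^~ m)) (eq_bigr (fun=> \sum_(u < m) u)) => [|c _].
  by rewrite sum_nat_const card_ord.
by apply: eq_bigr => u _; rewrite modnMDl modn_small.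
Qed.

Section Transversal.

Variable T : {set entry (3 * m)}.
Hypothesis T_transversal : is_latin_transversal (3 * m) (Lsq m) T.

Lemma transversal_Lsq e : e \in T -> e \in Lsq m.
Proof. by move=> eT; case: T_transversal => /subsetP/(_ e eT). Qed.

Lemma sum_row_index (F : nat -> nat) : \sum_(e in T) F e.1.1 = \sum_(r < 3 * m) F r.
Proof.
by case: T_transversal => _ _ rows _ _; apply: (big_fibers1 _ (fun r : 'I__ => F r) rows).
Qed.

Lemma sum_col_index (F : nat -> nat) : \sum_(e in T) F e.1.2 = \sum_(c < 3 * m) F c.
Proof.
by case: T_transversal => _ _ _ cols _; apply: (big_fibers1 _ (fun c : 'I__ => F c) cols).
Qed.

Lemma sum_symbol (F : nat -> nat) : \sum_(e in T) F e.2 = \sum_(s < 3 * m) F s.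
Proof.
by case: T_transversal => _ _ _ _ syms; apply: (big_fibers1 _ (fun s : 'I__ => F s) syms).
Qed.

Definition block_count i j := \sum_(e in T) (in_block m i j e : nat).

Definition special_count i j := \sum_(e in T) (in_block m i j e && special e.2 : nat).

Lemma block_count_row i : 1 <= i <= 3 ->
  block_count i 1 + block_count i 2 + block_count i 3 = m.
Proof.
move=> i_rng; rewrite -[RHS](sum_blk i_rng).
rewrite -(sum_row_index (fun r => blk m r == i : nat)).
rewrite /block_count -!big_split /=; apply: eq_bigr => e _.
by have := blk_range e.1.2; rewrite /in_block; lia.
Qed.

Lemma block_count_col j : 1 <= j <= 3 ->
  block_count 1 j + block_count 2 j + block_count 3 j = m.
Proof.
move=> j_rng; rewrite -[RHS](sum_blk j_rng).
rewrite -(sum_col_index (fun c => blk m c == j : nat)).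
rewrite /block_count -!big_split /=; apply: eq_bigr => e _.
by have := blk_range e.1.1; rewrite /in_block; lia.
Qed.

Lemma special_count_le i j : special_count i j <= block_count i j.
Proof. by apply: leq_sum => e _; case: in_block; case: special. Qed.

Lemma sum_special_class c : c < 3 ->
  \sum_(e in T) (special e.2 && (e.2 %/ m == c) : nat) = 1.
Proof.
move=> lt_c3.
by rewrite (sum_symbol (fun s => special s && (s %/ m == c) : nat)) sum_special_divn.
Qed.

Lemma sum_regular_class c : c < 3 ->
  \sum_(e in T) (~~ special e.2 && (e.2 %/ m == c) : nat) = m.-1.
Proof.
move=> lt_c3; have := sum_divn_eq lt_c3.
rewrite -(sum_symbol (fun s => s %/ m == c : nat)).
rewrite (eq_bigr (fun e : entry (3 * m) => (~~ special e.2 && (e.2 %/ m == c) : nat)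
                           + (special e.2 && (e.2 %/ m == c)))) => [|e _].
  rewrite big_split /= sum_special_class // => count_m.
  by rewrite -[in RHS]count_m addn1.
by case: special; rewrite /= ?addn0.
Qed.

Lemma block_count_diagonals :
  [/\ block_count 1 1 + block_count 2 3 + block_count 3 2
        = m.-1 + (special_count 1 1 + special_count 2 3 + special_count 3 2),
      block_count 1 2 + block_count 2 1 + block_count 3 3
        = m.-1 + (special_count 1 2 + special_count 2 1 + special_count 3 3) &
      block_count 1 3 + block_count 2 2 + block_count 3 1
        = m.-1 + (special_count 1 3 + special_count 2 2 + special_count 3 1)].
Proof.
rewrite /block_count /special_count.
split; [rewrite -(@sum_regular_class 0) | rewrite -(@sum_regular_class 1)
       | rewrite -(@sum_regular_class 2)] => //; rewrite -!big_split /=;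
  apply: eq_bigr => e eT; have := blk_range e.1.1; have := blk_range e.1.2.
all: case: (boolP (special e.2)) => [_ | nsp]; first by rewrite !andbT.
all: have [-> _] := Lsq_regular (transversal_Lsq eT) nsp.
all: by rewrite !andbF /in_block /=; move: (blk m e.1.1) (blk m e.1.2) => I J; lia.
Qed.

Lemma special_count_antidiagonals :
  [/\ special_count 1 1 + special_count 2 2 + special_count 3 3 = 1,
      special_count 1 2 + special_count 2 3 + special_count 3 1 = 1 &
      special_count 1 3 + special_count 2 1 + special_count 3 2 = 1].
Proof.
rewrite /special_count.
split; [rewrite -[RHS](@sum_special_class 0) | rewrite -[RHS](@sum_special_class 1)
       | rewrite -[RHS](@sum_special_class 2)] => //; rewrite -!big_split /=;
  apply: eq_bigr => e eT; have := blk_range e.1.1; have := blk_range e.1.2.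
all: case: (boolP (special e.2)) => [sp | _]; last by rewrite !andbF.
all: have [-> _] := Lsq_special (transversal_Lsq eT) sp.
all: by rewrite !andbT /in_block /=; move: (blk m e.1.1) (blk m e.1.2) => I J; lia.
Qed.

Lemma special_count_residue : odd m ->
  special_count 2 2 + special_count 3 3 = special_count 2 3 + special_count 3 2.
Proof.
move=> m_odd.
have m_dvd_residues : m %| \sum_(e in T) residue e.
  rewrite /dvdn /residue modn_summ big_split /=.
  rewrite (sum_row_index (modn^~ m)) (sum_col_index (modn^~ m)) sum_modn.
  by rewrite -/(dvdn _ _) dvdn_add // dvdn_mull // dvdn_sum_ord_odd.
have m_dvd_symbols : m %| \sum_(e in T) e.2 %% m.
  by rewrite (sum_symbol (modn^~ m)) sum_modn dvdn_mull // dvdn_sum_ord_odd.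
have balance : \sum_(e in T) residue e + m.-1 * (special_count 2 3 + special_count 3 2)
             = \sum_(e in T) e.2 %% m + m.-1 * (special_count 2 2 + special_count 3 3).
  rewrite /special_count -!big_split !big_distrr -!big_split /=.
  apply: eq_bigr => e eT.
  case: (boolP (special e.2)) => [sp | nsp]; last first.
    by have [_ ->] := Lsq_regular (transversal_Lsq eT) nsp; rewrite !andbF.
  have [class_e ->] := Lsq_special (transversal_Lsq eT) sp.
  rewrite special_modn // class_e !andbT !(mulnC _ m.-1) -!mulnDr; congr (_ * _).
  have := blk_range e.1.1; have := blk_range e.1.2; rewrite /in_block.
  by case: (blk m e.1.1) => [|[|[|[|]]]] //; case: (blk m e.1.2) => [|[|[|[|]]]].
have [anti0 anti1 anti2] := special_count_antidiagonals.
move: balance; case/dvdnP: m_dvd_residues => k1 ->; case/dvdnP: m_dvd_symbols => k2 ->.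
by move/(congr1 (modn^~ m)); rewrite /= !modnMDl => /predn_mul_mod_inj -> //; lia.
Qed.

End Transversal.

End BlockStructure.

Theorem theorem15 (m : nat) (T : {set entry (3 * m)}) :
  3 <= m -> odd m ->
  is_latin_transversal (3 * m) (Lsq m) T ->
  forall i j : nat, 1 <= i <= 3 -> 1 <= j <= 3 ->
  exists e : entry (3 * m), (e \in T) && in_block m i j e.
Proof.
move=> m_gt2 m_odd T_tr i j i_rng j_rng.
have := block_array_gt0 (block_count_row m_gt2 T_tr) (block_count_col m_gt2 T_tr)
  (@special_count_le m T) (block_count_diagonals m_gt2 T_tr)
  (special_count_antidiagonals m_gt2 T_tr) (special_count_residue m_gt2 T_tr m_odd)
  i_rng j_rng.
rewrite lt0n sum_nat_eq0 negb_forall => /existsP[e].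
by rewrite negb_imply eqb0 negbK => e_in_block; exists e.
Qed.
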